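(* Let $\xi$ be a real random variable with $\mathbb{E}\xi^2=\infty$ and let $M>0$. Then there exists $m_0$, depending only on $M$ and the distribution of $\xi$, such that for every $m>m_0$, if $B$ is an $m\times m$ random matrix whose entries are i.i.d. copies of $\xi$, then $$\|B\|\ge M\sqrt m$$ with probability at least $1-\exp(-M^2m)$.
   Context: $\|\cdot\|$ denotes the operator norm (Euclidean norm to Euclidean norm). *)

From HB Require Import structures.
From mathcomp Require Import all_boot all_order all_algebra.
From mathcomp Require Import all_classical all_reals all_analysis.
Set Implicit Arguments. Unset Strict Implicit. Unset Printing Implicit Defensive.
Import Order.TTheory GRing.Theory Num.Theory.
Import numFieldNormedType.Exports.
Local Open Scope classical_set_scope.
Local Open Scope ring_scope.

Definition eucl_norm (R : realType) (n : nat) (v : 'cV[R]_n) : R :=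
  Num.sqrt (\sum_(i < n) (v i ord0) ^+ 2).

Definition opnorm (R : realType) (m n : nat) (A : 'M[R]_(m, n)) : R :=
  sup [set eucl_norm (A *m v) | v in [set v : 'cV[R]_n | eucl_norm v <= 1]].

(* Mutual independence of a finite family of real random variables:
   product rule for every choice of Borel sets (choosing setT for some
   indices gives the product rule over every subfamily). *)
Definition mutually_independent (d : measure_display) (T : measurableType d)
  (R : realType) (P : probability T R) (I : finType) (X : I -> T -> R) : Prop :=
  forall A : I -> set R, (forall i, measurable (A i)) ->
    P (\bigcap_(i in [set: I]) (X i @^-1` A i)) =
    (\prod_(i : I) P (X i @^-1` A i))%E.

(* Since E xi^2 = +oo, there is a simple function 0 <= g <= x^2 with E g(xi) > 4 M^2.
   Once m exceeds the largest value of g, the exponential Markov inequality with parameter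
   t = 1/m, independence, and exp(-s) <= 1 - s/2 on [0, 1] give
   P(sum_ij g(X_ij) < M^2 m^2) <= exp(t M^2 m^2) (1 - t E g / 2)^(m^2) <= exp(-M^2 m).
   Off this event the squared Frobenius norm of B is at least M^2 m^2, so some column of B
   has squared length at least M^2 m, and ||B|| >= M sqrt m. *)

From HB Require Import structures.
From mathcomp Require Import all_boot all_order all_algebra.
From mathcomp Require Import all_classical all_reals all_analysis.
From mathcomp Require Import finmap ring lra.
Import Order.TTheory GRing.Theory Num.Theory.
Import numFieldNormedType.Exports HBNNSimple.
Local Open Scope classical_set_scope.
Local Open Scope ring_scope.
Set Implicit Arguments. Unset Strict Implicit. Unset Printing Implicit Defensive.

Section OperatorNorm.
Variable R : realType.

Definition sqnorm n (v : 'cV[R]_n) : R := \sum_(i < n) v i ord0 ^+ 2.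

Lemma sqnorm_ge0 n (v : 'cV[R]_n) : 0 <= sqnorm v.
Proof. by apply: sumr_ge0 => i _; rewrite sqr_ge0. Qed.

Lemma eucl_norm_le1 n (v : 'cV[R]_n) : (eucl_norm v <= 1) = (sqnorm v <= 1).
Proof. by rewrite /eucl_norm -{1}sqrtr1 ler_sqrt. Qed.

Lemma sqnorm0 n : sqnorm (0 : 'cV[R]_n) = 0.
Proof. by rewrite /sqnorm big1 // => i _; rewrite mxE expr0n. Qed.

Lemma norm_entry_le1 n (v : 'cV[R]_n) k : sqnorm v <= 1 -> `|v k ord0| <= 1.
Proof.
move=> v1; have : v k ord0 ^+ 2 <= 1.
  apply: le_trans v1; rewrite /sqnorm (bigD1 k) //= lerDl.
  by apply: sumr_ge0 => i _; rewrite sqr_ge0.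
by move=> h; rewrite -(ler_pXn2r (_ : 0 < 2)%N) ?nnegrE // real_normK ?num_real // expr1n.
Qed.

Definition row_norm1 m n (B : 'M[R]_(m, n)) i := \sum_k `|B i k|.

Lemma norm_mulmx_entry_le m n (B : 'M[R]_(m, n)) v i :
  sqnorm v <= 1 -> `|(B *m v) i ord0| <= row_norm1 B i.
Proof.
move=> v1; rewrite mxE; apply: (le_trans (ler_norm_sum _ _ _)).
apply: ler_sum => k _; rewrite normrM.
by rewrite -[X in _ <= X]mulr1 ler_wpM2l // norm_entry_le1.
Qed.

Lemma opnorm_has_sup m n (B : 'M[R]_(m, n)) :
  has_sup [set eucl_norm (B *m v) | v in [set v : 'cV[R]_n | eucl_norm v <= 1]].
Proof.
split; first by exists (eucl_norm (B *m 0)), 0; rewrite //= eucl_norm_le1 sqnorm0.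
exists (Num.sqrt (\sum_i row_norm1 B i ^+ 2)) => _ [v /= v1 <-].
rewrite ler_sqrt; last by apply: sumr_ge0 => i _; rewrite sqr_ge0.
apply: ler_sum => i _; rewrite -real_normK ?num_real // lerXn2r ?nnegrE //.
  by apply: sumr_ge0 => k _.
by apply: norm_mulmx_entry_le; rewrite -eucl_norm_le1.
Qed.

Lemma opnorm_ub m n (B : 'M[R]_(m, n)) v :
  eucl_norm v <= 1 -> eucl_norm (B *m v) <= opnorm B.
Proof. by move=> v1; apply: sup_upper_bound; [exact: opnorm_has_sup | exists v]. Qed.

Lemma opnorm_ge0 m n (B : 'M[R]_(m, n)) : 0 <= opnorm B.
Proof.
by apply: le_trans (opnorm_ub B (v := 0) _); rewrite ?sqrtr_ge0 ?eucl_norm_le1 ?sqnorm0.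
Qed.

Lemma sqnorm_le_sqr_opnorm m n (B : 'M[R]_(m, n)) v :
  sqnorm v <= 1 -> sqnorm (B *m v) <= opnorm B ^+ 2.
Proof.
rewrite -eucl_norm_le1 => /(opnorm_ub B); rewrite /eucl_norm => Bv.
by rewrite -(sqr_sqrtr (sqnorm_ge0 (B *m v))) lerXn2r ?nnegrE ?sqrtr_ge0 ?opnorm_ge0.
Qed.

Lemma sqnorm_col_le_opnorm m n (B : 'M[R]_(m, n)) j :
  \sum_i B i j ^+ 2 <= opnorm B ^+ 2.
Proof.
have -> : \sum_i B i j ^+ 2 = sqnorm (B *m delta_mx j 0).
  by apply: eq_bigr => i _; rewrite -colE mxE.
apply: sqnorm_le_sqr_opnorm; rewrite /sqnorm (bigD1 j) //= big1.
  by rewrite mxE !eqxx expr1n addr0.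
by move=> i ij; rewrite mxE (negbTE ij) expr0n.
Qed.

Lemma opnorm_ge_frobenius m n (B : 'M[R]_(m, n)) c : (0 < n)%N -> 0 <= c ->
  n%:R * c ^+ 2 <= \sum_i \sum_j B i j ^+ 2 -> c <= opnorm B.
Proof.
move=> n0 c0 hB; rewrite -(ler_pXn2r (n := 2)) ?nnegrE ?opnorm_ge0 //.
rewrite -(ler_pM2l (_ : 0 < n%:R)) ?ltr0n //; apply: le_trans hB _.
rewrite exchange_big /=.
apply: le_trans (ler_sum _ (fun j _ => sqnorm_col_le_opnorm B j)) _.
by rewrite sumr_const card_ord mulr_natl.
Qed.

Lemma rat_approx_le (x eta : R) : 0 < eta ->
  exists q : rat, `|ratr q| <= `|x| /\ `|ratr q - x| <= eta.
Proof.
move=> eta0; wlog x0 : x / 0 <= x => [hw|].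
  have [/hw //|/ltW] := leP 0 x; rewrite -oppr_ge0 => /hw [q [qx qe]].
  rewrite normrN in qx; rewrite opprK in qe.
  by exists (- q); rewrite rmorphN normrN -opprD normrN.
have [x_le0|x_gt0] := leP x 0.
  have -> : x = 0 by apply/le_anti/andP.
  by exists 0; rewrite rmorph0 subr0 normr0 lexx ltW.
have /rat_in_itvoo [q] : Num.max 0 (x - eta) < x by rewrite gt_max x_gt0 ltrBlDr ltrDl.
rewrite in_itv /= gt_max => /andP [/andP [q0 xq] qx].
exists q; rewrite (gtr0_norm q0) (gtr0_norm x_gt0) ltr0_norm ?subr_lt0 //; split; lra.
Qed.

(* b ^+ 2 = a ^+ 2 + 2 a (b - a) + (b - a) ^+ 2 and |2 a (b - a)| <= 2 eta r ^+ 2. *)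
Lemma sqr_ge_perturb (a b r eta : R) : 0 <= eta -> `|a| <= r -> `|b - a| <= eta * r ->
  a ^+ 2 - 2 * eta * r ^+ 2 <= b ^+ 2.
Proof.
move=> eta0; rewrite !ler_norml => /andP [ar ra] /andP [bar rba].
have p1 : 0 <= (r - a) * (eta * r - (b - a)) by apply: mulr_ge0; lra.
have p2 : 0 <= (r + a) * (eta * r + (b - a)) by apply: mulr_ge0; lra.
have p3 : 0 <= (b - a) ^+ 2 by apply: sqr_ge0.
nra.
Qed.

Lemma sqnorm_mulmx_rat_approx m n (B : 'M[R]_(m, n)) v e : 0 < e -> sqnorm v <= 1 ->
  exists u : 'cV[rat]_n,
    sqnorm (map_mx ratr u) <= 1 /\ sqnorm (B *m v) - e <= sqnorm (B *m map_mx ratr u).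
Proof.
move=> e0 v1; set S := \sum_i row_norm1 B i ^+ 2.
have S1 : 0 < 1 + S by rewrite ltr_pwDl // sumr_ge0 // => i _; rewrite sqr_ge0.
(* Rounding each entry within eta costs at most 2 eta (row_norm1 B i) ^+ 2 in row i. *)
set eta := e / (2 * (1 + S)).
have eta0 : 0 < eta by rewrite divr_gt0 // mulr_gt0.
have [f hf] := choice (fun k : 'I_n => rat_approx_le (v k ord0) eta0).
exists (\col_k f k); have uE k : map_mx (@ratr R) (\col_k f k) k ord0 = ratr (f k).
  by rewrite !mxE.
split.
  apply: le_trans v1; apply: ler_sum => j _; rewrite uE.
  rewrite -(real_normK (num_real (ratr (f j) : R))) -(real_normK (num_real (v j ord0))).
  by rewrite lerXn2r ?nnegrE //; exact: (hf j).1.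
apply: le_trans (_ : sqnorm (B *m v) - 2 * eta * S <= _).
  have -> : 2 * eta * S = e * (S / (1 + S)) by rewrite /eta; field; rewrite gt_eqF.
  by rewrite lerD2l lerN2 ler_piMr ?ltW // ltr_pdivrMr //; lra.
rewrite /sqnorm /S mulr_sumr -sumrB; apply: ler_sum => i _.
apply: sqr_ge_perturb; [exact: ltW | exact: norm_mulmx_entry_le |].
rewrite !mxE -sumrB /row_norm1 mulr_sumr; apply: le_trans (ler_norm_sum _ _ _) _.
apply: ler_sum => j _; rewrite uE -mulrBr normrM mulrC ler_wpM2r //.
exact: (hf j).2.
Qed.

Lemma sqr_lt_of_sub_lt (c d e : R) : 0 < c -> 0 < d -> 0 <= e -> c - d < e ->
  c ^+ 2 - 2 * c * d < e ^+ 2.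
Proof.
move=> c0 d0 e0 cde; have [cd0|] := leP 0 (c - d); last by nra.
have : (c - d) ^+ 2 < e ^+ 2 by rewrite ltrXn2r.
nra.
Qed.

Lemma inv_succ_lt (e : R) : 0 < e -> exists k : nat, k.+1%:R^-1 < e.
Proof.
move=> e0; exists (Num.trunc e^-1).
by rewrite -[X in _ < X]invrK ltf_pV2 ?posrE ?invr_gt0 ?truncnS_gt.
Qed.

(* Countably many rational test vectors suffice: this makes [c <= opnorm B] measurable. *)
Lemma opnorm_ge_ratP m n (B : 'M[R]_(m, n)) c : 0 < c ->
  (c <= opnorm B) <-> (forall k : nat, exists u : 'cV[rat]_n,
    sqnorm (map_mx ratr u) <= 1 /\ c ^+ 2 - k.+1%:R^-1 < sqnorm (B *m map_mx ratr u)).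
Proof.
move=> c0; split => [cB k|approx].
  set e : R := k.+1%:R^-1; have e0 : 0 < e by rewrite invr_gt0 ltr0n.
  have d0 : 0 < e / (4 * c) by rewrite divr_gt0 // mulr_gt0.
  have [_ [v /= v1 <-] Bv] := sup_adherent d0 (opnorm_has_sup B).
  rewrite eucl_norm_le1 in v1.
  have [u [u1 Bu]] := sqnorm_mulmx_rat_approx B (divr_gt0 e0 (ltr0Sn _ 1)) v1.
  exists u; split => //; apply: lt_le_trans Bu.
  have := sqr_lt_of_sub_lt c0 d0 (sqrtr_ge0 _) (le_lt_trans (lerB cB (lexx _)) Bv).
  rewrite sqr_sqrtr ?sqnorm_ge0 //.
  have -> : 2 * c * (e / (4 * c)) = e / 2 by field; rewrite gt_eqF.
  rewrite /sqnorm; lra.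
suff : c ^+ 2 <= opnorm B ^+ 2 by rewrite ler_pXn2r // nnegrE ?opnorm_ge0 ?ltW.
rewrite leNgt; apply/negP; rewrite -subr_gt0 => /inv_succ_lt [k hk].
have [u [u1 Bu]] := approx k.
have := lt_le_trans Bu (sqnorm_le_sqr_opnorm B u1).
by rewrite ltrBlDr -ltrBlDl => /(lt_trans hk); rewrite ltxx.
Qed.

End OperatorNorm.

Section MeasurableOpnorm.
Context d (T : measurableType d) (R : realType) (m n : nat).
Variable X : 'I_m -> 'I_n -> T -> R.
Hypothesis mX : forall i j, measurable_fun setT (X i j).

Lemma measurable_sqnorm_mulmx (v : 'cV[R]_n) :
  measurable_fun setT (fun w => sqnorm ((\matrix_(i, j) X i j w) *m v)).
Proof.
have -> : (fun w => sqnorm ((\matrix_(i, j) X i j w) *m v)) =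
    (fun w => \sum_i (\sum_j X i j w * v j ord0) ^+ 2).
  apply/funext => w; apply: eq_bigr => i _; rewrite mxE.
  by congr (_ ^+ 2); apply: eq_bigr => j _; rewrite mxE.
apply: measurable_sum => i; apply: measurable_realfun.measurable_funX.
apply: measurable_sum => j.
by apply: measurable_realfun.measurable_funM => //; exact: measurable_cst.
Qed.

Lemma measurable_opnorm_ge c : 0 < c ->
  measurable [set w | c <= opnorm (\matrix_(i, j) X i j w)].
Proof.
move=> c0; pose A k (u : 'cV[rat]_n) := [set w | sqnorm (map_mx (@ratr R) u) <= 1 /\
  c ^+ 2 - k.+1%:R^-1 < sqnorm ((\matrix_(i, j) X i j w) *m map_mx ratr u)].
have -> : [set w | c <= opnorm (\matrix_(i, j) X i j w)] =
    \bigcap_(k in [set: nat]) \bigcup_(u in [set: 'cV[rat]_n]) A k u.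
  apply/seteqP; split => w /=.
    by move=> /(opnorm_ge_ratP _ c0) approx k _; have [u hu] := approx k; exists u.
  by move=> approx; apply/(opnorm_ge_ratP _ c0) => k; have [u _ hu] := approx k I; exists u.
apply: bigcap_measurableType => k _.
apply: countable_bigcupT_measurable; first exact: countableP.
move=> u; have [u1|u1] := boolP (sqnorm (map_mx (@ratr R) u) <= 1); last first.
  rewrite (_ : A k u = set0) //; apply/seteqP; split => w //= [u1' _].
  by rewrite u1' in u1.
have -> : A k u = (fun w => sqnorm ((\matrix_(i, j) X i j w) *m map_mx ratr u)) @^-1`
    `]c ^+ 2 - k.+1%:R^-1, +oo[.
  by apply/seteqP; split => w /=; rewrite in_itv /= andbT => // [[]].
rewrite -[_ @^-1` _]setTI; exact: measurable_sqnorm_mulmx.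
Qed.

End MeasurableOpnorm.

Lemma expRN_le_1_sub_half (R : realType) (x : R) : 0 <= x -> x <= 1 ->
  expR (- x) <= 1 - x / 2.
Proof.
move=> x0 x1; rewrite expRN -div1r ler_pdivrMr ?expR_gt0 //.
have h : 0 <= 1 - x / 2 by lra.
have := ler_wpM2l h (expR_ge1Dx x); nra.
Qed.

Lemma nnsfun_approx_integral_pinfty d (T : measurableType d) (R : realType)
  (mu : {measure set T -> \bar R}) (f : T -> R) : (forall x, 0 <= f x) ->
  (\int[mu]_x (f x)%:E = +oo)%E -> forall C : R,
  exists h : {nnsfun T >-> R}, (forall x, h x <= f x) /\ (C%:E < sintegral mu h)%E.
Proof.
move=> f0 fpinfty C; apply: contrapT => noh.
suff : (\int[mu]_x (f x)%:E <= C%:E)%E by rewrite fpinfty leNgt ltry.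
rewrite ge0_integralE => [|x _]; last by rewrite lee_fin.
apply: ge_ereal_sup => _ [h /= hf <-]; rewrite leNgt; apply/negP => Ch; apply: noh.
by exists h; split => // x; have := hf x; rewrite patchT ?in_setT // lee_fin.
Qed.

Section SimpleLowerTail.
Context (R : realType) (mu : probability (measurableTypeR R) R).
Context d (T : measurableType d) (P : probability T R) (I : finType) (Y : I -> T -> R).
Hypotheses (mY : forall i, measurable_fun setT (Y i))
  (indY : mutually_independent P Y)
  (distrY : forall i A, measurable A -> P (Y i @^-1` A) = mu A).
Variable g : {nnsfun (measurableTypeR R) >-> R}.

Lemma measurable_sum_lt (a : R) : measurable [set w | (\sum_i g (Y i w) < a)%R].
Proof.
have mS : measurable_fun setT (fun w => \sum_i g (Y i w)).
  apply: measurable_sum => i; apply: measurableT_comp; last exact: mY.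
  exact: (@measurable_funPT _ _ _ _ g).
have := mS measurableT _ (measurable_itv `]-oo, a[); rewrite setTI.
by congr measurable; apply/seteqP; split => w; rewrite /= in_itv.
Qed.

Let V : {fset R} := fset_set (range g).
Let q (y : R) : R := fine (mu (g @^-1` [set y])).

Let mg y : measurable (g @^-1` [set y]).
Proof. exact: measurable_funPTI. Qed.

Let muE y : mu (g @^-1` [set y]) = (q y)%:E.
Proof. by rewrite fineK // fin_num_measure. Qed.

Let q_ge0 y : 0 <= q y.
Proof. exact: fine_ge0. Qed.

Let sum_q_le1 : \sum_(y <- V) q y <= 1.
Proof.
rewrite -lee_fin -sumEFin; under eq_bigr do rewrite -muE.
rewrite -measure_fbigsetU => [||y z _ _ [x [/= <- <-]] //]; last by move=> y _.
by apply: probability_le1; apply: bigsetU_measurable.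
Qed.

Let sintegral_gE : sintegral mu g = (\sum_(y <- V) y * q y)%:E.
Proof.
rewrite sintegralE fsbig_finite //= -sumEFin.
by apply: eq_bigr => y _; rewrite EFinM muE.
Qed.

Let E (σ : {ffun I -> V}) : set T :=
  \bigcap_(i in [set: I]) Y i @^-1` (g @^-1` [set val (σ i)]).

Let mE σ : measurable (E σ).
Proof.
apply: fin_bigcap_measurable => [|i _]; first exact: finite_finset.
by have := mY i measurableT (mg (val (σ i))); rewrite setTI.
Qed.

Let PE σ : P (E σ) = (\prod_i q (val (σ i)))%:E.
Proof.
rewrite /E (indY (fun i => mg (val (σ i)))) -prodEFin.
by apply: eq_bigr => i _; rewrite (distrY _ (mg _)) muE.
Qed.

Let lt_sum_sub_bigcup a :
  [set w | \sum_i g (Y i w) < a] `<=`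
  \bigcup_(σ in [set` [pred σ : {ffun I -> V} | \sum_i val (σ i) < a]]) E σ.
Proof.
have gV x : g x \in V by rewrite in_fset_set //; apply/mem_set; exists x.
move=> w /= lt_a; exists [ffun i => FSetSub (gV (Y i w))].
  by rewrite /= ssrbool.inE; under eq_bigr do rewrite ffunE.
by move=> i _; rewrite /= ffunE.
Qed.

Let Phi t := \sum_(k : V) expR (- (t * val k)) * q (val k).

Let Phi_ge0 t : 0 <= Phi t.
Proof. by apply: sumr_ge0 => k _; rewrite mulr_ge0 ?expR_ge0. Qed.

(* Exponential Markov: 1 <= exp (t (a - \sum_i val (σ i))) on the summation range. *)
Let sum_lt_le_expR a t : 0 < t ->
  \sum_(σ : {ffun I -> V} | \sum_i val (σ i) < a) \prod_i q (val (σ i)) <=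
  expR (t * a) * Phi t ^+ #|I|.
Proof.
move=> t0; rewrite -prodr_const bigA_distr_bigA mulr_sumr big_mkcond /=.
apply: ler_sum => σ _; case: ifP => [lt_a|_]; last first.
  by rewrite mulr_ge0 ?expR_ge0 // prodr_ge0 // => i _; rewrite mulr_ge0 ?expR_ge0.
rewrite big_split /= mulrA -expR_sum -expRD ler_peMl ?prodr_ge0 //.
apply: le_trans (expR_ge1Dx _); rewrite lerDl sumrN -mulr_sumr -mulrBr.
by rewrite mulr_ge0 ?subr_ge0 ?ltW.
Qed.

Let Phi_le t : 0 < t -> (forall x, t * g x <= 1) ->
  Phi t <= expR (- (t / 2 * \sum_(y <- V) y * q y)).
Proof.
move=> t0 tg; apply: le_trans (expR_ge1Dx _).
rewrite /Phi -(big_seq_fsetE _ _ predT (fun y => expR (- (t * y)) * q y)) /=.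
apply: (@le_trans _ _ (\sum_(y <- V) (1 - t * y / 2) * q y)).
  rewrite !big_seq; apply: ler_sum => y; rewrite in_fset_set // => /set_mem [x _ <-].
  by rewrite ler_wpM2r // expRN_le_1_sub_half // mulr_ge0 // ltW.
have -> : \sum_(y <- V) (1 - t * y / 2) * q y =
    \sum_(y <- V) q y - t / 2 * \sum_(y <- V) y * q y.
  by rewrite mulr_sumr -sumrB; apply: eq_bigr => y _; ring.
by rewrite lerD2r.
Qed.

Let P_sum_lt_le a :
  (P [set w | (\sum_i g (Y i w) < a)%R] <=
   ((\sum_(σ : {ffun I -> V} | \sum_i val (σ i) < a) \prod_i q (val (σ i)))%R)%:E)%E.
Proof.
apply: le_trans (content_sub_fsum P finite_finset (fun σ _ => mE σ)
  (measurable_sum_lt a) (@lt_sum_sub_bigcup a)) _.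
rewrite -(@bigfs _ _ _ _ (index_enum {ffun I -> V})) ?index_enum_uniq //; last first.
  by move=> σ _; rewrite mem_index_enum.
rewrite -sumEFin; apply: lee_sum => σ _.
by rewrite le_eqVlt; apply/orP; left; apply/eqP; exact: PE.
Qed.

Lemma lower_tail_sum_nnsfun (a t c : R) : 0 < t -> (forall x, t * g x <= 1) ->
  (c%:E <= sintegral mu g)%E ->
  (P [set w | (\sum_i g (Y i w) < a)%R] <= (expR (t * a - #|I|%:R * (t / 2) * c))%:E)%E.
Proof.
move=> t0 tg; rewrite sintegral_gE lee_fin => c_le.
apply: le_trans (P_sum_lt_le a) _; rewrite lee_fin.
apply: le_trans (@sum_lt_le_expR a t t0) _.
rewrite expRD -mulrA -mulrN expRM_natl ler_wpM2l ?expR_ge0 //.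
apply: lerXn2r; rewrite ?nnegrE ?expR_ge0 //; apply: le_trans (Phi_le t0 tg) _.
by rewrite ler_expR lerN2 ler_wpM2l // divr_ge0 // ltW.
Qed.

End SimpleLowerTail.

Lemma probability_setC_sub_ge d (T : measurableType d) (R : realType)
  (P : probability T R) (A B : set T) (e : R) :
  measurable A -> measurable B -> ~` A `<=` B -> (P A <= e%:E)%E -> ((1 - e)%:E <= P B)%E.
Proof.
move=> mA mB AB PA.
apply: (@le_trans _ _ (P (~` A))); last first.
  exact: le_measure (mem_set (measurableC mA)) (mem_set mB) AB.
rewrite probability_setC // -(fineK (fin_num_measure P _ mA)) -EFinB lee_fin lerB //.
by rewrite -lee_fin fineK // fin_num_measure.
Qed.

Unset Implicit Arguments.

Theorem mainTheorem19 (R : realType) (mu : probability (measurableTypeR R) R)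
  (hmu : (\int[mu]_x ((x ^+ 2)%:E) = +oo)%E) (M : R) (hM : 0 < M) :
  exists m0 : nat, forall m : nat, (m0 < m)%N ->
  forall (d : measure_display) (T : measurableType d) (P : probability T R)
    (X : 'I_m -> 'I_m -> T -> R),
    (forall i j, measurable_fun setT (X i j)) ->
    mutually_independent P (fun ij : 'I_m * 'I_m => X ij.1 ij.2) ->
    (forall i j A, measurable A -> P (X i j @^-1` A) = mu A) ->
    ((1 - expR (- (M ^+ 2 * m%:R)))%:E <=
      P [set w | (M * Num.sqrt (m%:R) <= opnorm (\matrix_(i, j) X i j w))%R])%E.
Proof.
have [g [g_le Eg_gt]] := @nnsfun_approx_integral_pinfty _ (measurableTypeR R) R mu
  (fun x => x ^+ 2) (@sqr_ge0 R) hmu (4 * M ^+ 2).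
have [B [_ gB]] := simple_bounded g.
exists (Num.trunc (B + 1)) => m m_gt d T P X mX indX distrX.
have m0 : (0 < m)%N by apply: leq_ltn_trans m_gt.
have Bm : B + 1 < m%:R by apply: lt_le_trans (truncnS_gt _) _; rewrite ler_nat.
have t0 : 0 < m%:R^-1 :> R by rewrite invr_gt0 ltr0n.
have tg x : m%:R^-1 * g x <= 1.
  rewrite mulrC ler_pdivrMr ?ltr0n // mul1r.
  by apply: le_trans (ltW Bm); rewrite -[g x]ger0_norm // gB // ltrDl.
have := lower_tail_sum_nnsfun (fun ij => mX ij.1 ij.2) indX (fun ij => distrX ij.1 ij.2)
  (M ^+ 2 * m%:R ^+ 2) t0 tg (ltW Eg_gt).
have -> : m%:R^-1 * (M ^+ 2 * m%:R ^+ 2) - #|{: 'I_m * 'I_m}|%:R * (m%:R^-1 / 2) * (4 * M ^+ 2)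
    = - (M ^+ 2 * m%:R).
  by rewrite card_prod card_ord natrM; field; rewrite pnatr_eq0 -lt0n.
apply: probability_setC_sub_ge; first exact: measurable_sum_lt.
  by apply: measurable_opnorm_ge => //; rewrite mulr_gt0 ?sqrtr_gt0 ?ltr0n.
move=> w /negP; rewrite -leNgt /= => a_le.
apply: opnorm_ge_frobenius => //; first by rewrite mulr_ge0 ?sqrtr_ge0 ?ltW.
rewrite exprMn sqr_sqrtr ?ler0n // mulrCA -expr2; apply: le_trans a_le _.
rewrite pair_big /=; apply: ler_sum => -[i j] _; rewrite mxE; exact: g_le.
Qed.
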